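(* Consider a PWA system, as defined in the context, satisfying (A1)–(A5) with $\mu_c=1$. Then its inverse is given by the explicit, anticausal PWA system $x_{k+1}=\overline{\mathbf{A}}_k x_k+\overline{\mathbf{B}}_k y_{k+1}+\overline{\mathbf{F}}_k$, $u_k=\overline{\mathbf{C}}_k x_k+\overline{\mathbf{D}}_k y_{k+1}+\overline{\mathbf{G}}_k$, where $\overline{\mathbf{D}}_k=(C_{k+1}\mathbf{B}_k)^{-1}$, $\overline{\mathbf{C}}_k=-\overline{\mathbf{D}}_kC_{k+1}\mathbf{A}_k$, $\overline{\mathbf{G}}_k=-\overline{\mathbf{D}}_k(C_{k+1}\mathbf{F}_k+G_{k+1})$, $\overline{\mathbf{A}}_k=\mathbf{A}_k+\mathbf{B}_k\overline{\mathbf{C}}_k$, $\overline{\mathbf{B}}_k=\mathbf{B}_k\overline{\mathbf{D}}_k$, $\overline{\mathbf{F}}_k=\mathbf{F}_k+\mathbf{B}_k\overline{\mathbf{G}}_k$.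
   Context: A discrete-time piecewise affine (PWA) system is $x_{k+1}=\mathbf{A}_k x_k+\mathbf{B}_k u_k+\mathbf{F}_k$, $y_k=\mathbf{C}_k x_k+\mathbf{D}_k u_k+\mathbf{G}_k$, $k\in\mathbb{Z}$, with state $x_k\in\mathbb{R}^{n_x}$, input $u_k\in\mathbb{R}^{n_u}$, output $y_k\in\mathbb{R}^{n_y}$. For each $M\in\{A,B,F,C,D,G\}$, $\mathbf{M}_k=\sum_{q=1}^{|Q|} M_{q,k}K_q(\delta_k)$, where the $M_{q,k}$ are real matrices (possibly time-varying), $\delta_k=\delta(x_k)=H(Px_k-\theta)$ with $H$ the elementwise Heaviside step function, $P\in\mathbb{R}^{n_P\times n_x}$, $\theta\in\mathbb{R}^{n_P}$, and $K_q(\delta)=1$ if $\delta\in\Delta^*_q$ and $0$ otherwise ($\Delta^*_q$ a set of binary vectors). The locations $Q_q=\{x:\delta(x)\in\Delta^*_q\}$ are disjoint, have union $\mathbb{R}^{n_x}$, and each is a union of disjoint convex polytopes. The $q$-th component model is the affine system with matrices $A_{q,k},\dots,G_{q,k}$ and relative degree $\mu_q$ (number of time steps for an input value to influence the output). Assumptions: (A1) $x_0$ lies in the set of initial conditions from which every location is reachable in finite time; (A2) single-input single-output; (A3) switching depends only on the state, not the input; (A4) all component models have the same relative degree $\mu_c$ for all $q$ and $k$; (A5) $\mathbf{C}_k=C_k$, $\mathbf{D}_k=D_k$, $\mathbf{G}_k=G_k$, where $C_k,D_k,G_k$ may vary with time but are identical for all locations and known for all $k$. The inverse is explicit in that $u_k$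 and $x_{k+1}$ are given directly as functions of $x_k$ and $y_{k+1}$ (the selector functions being evaluated at $x_k$); it is anticausal since $u_k$ depends on the future output $y_{k+1}$. *)

From mathcomp Require Import all_boot all_order all_algebra.
Set Implicit Arguments. Unset Strict Implicit. Unset Printing Implicit Defensive.
Import Order.TTheory GRing.Theory Num.Theory.
Local Open Scope ring_scope.

(* A discrete-time SISO PWA system with nQ locations, state dimension nx,
   nP hyperplanes.  By (A5), C, D, G are common to all locations (but
   time-varying); by (A2) input and output are scalars. *)
Record pwa (R : realFieldType) (nx nP nQ : nat) := PWA {
  pA : 'I_nQ -> int -> 'M[R]_nx;
  pB : 'I_nQ -> int -> 'cV[R]_nx;
  pF : 'I_nQ -> int -> 'cV[R]_nx;
  pC : int -> 'rV[R]_nx;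
  pD : int -> R;
  pG : int -> R;
  pP : 'M[R]_(nP, nx);
  ptheta : 'cV[R]_nP;
  pDelta : 'I_nQ -> {set {ffun 'I_nP -> bool}}
}.

Section PWADefs.
Variables (R : realFieldType) (nx nP nQ : nat) (S : pwa R nx nP nQ).

(* Heaviside step, convention H(0) = 1 *)
Definition heav (r : R) : bool := 0 <= r.

Definition selector (x : 'cV[R]_nx) : {ffun 'I_nP -> bool} :=
  [ffun i => heav ((pP S *m x - ptheta S) i ord0)].

Definition in_loc (q : 'I_nQ) (x : 'cV[R]_nx) : bool := selector x \in pDelta S q.

Definition Ksel (q : 'I_nQ) (x : 'cV[R]_nx) : R := if in_loc q x then 1 else 0.

Definition boldM (a b : nat) (M : 'I_nQ -> int -> 'M[R]_(a, b)) (k : int)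
  (x : 'cV[R]_nx) : 'M[R]_(a, b) := \sum_(q < nQ) Ksel q x *: M q k.

Definition bA := boldM (pA S).
Definition bB := boldM (pB S).
Definition bF := boldM (pF S).

Definition sc (m : 'M[R]_1) : R := m ord0 ord0.

Definition is_traj (x : int -> 'cV[R]_nx) (u y : int -> R) : Prop :=
  forall k : int,
    x (k + 1) = bA k (x k) *m x k + bB k (x k) *m (u k)%:M + bF k (x k) /\
    y k = sc (pC S k *m x k) + pD S k * u k + pG S k.

Fixpoint sim (v : int -> R) (x0 : 'cV[R]_nx) (n : nat) : 'cV[R]_nx :=
  match n with
  | 0 => x0
  | n'.+1 => let xk := sim v x0 n' in
             bA n' xk *m xk + bB n' xk *m (v n')%:M + bF n' xk
  end.

Definition all_locs_reachable (x0 : 'cV[R]_nx) : Prop :=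
  forall q : 'I_nQ, exists (v : int -> R) (n : nat), in_loc q (sim v x0 n).

Definition locations_partition : Prop :=
  forall x : 'cV[R]_nx, exists! q : 'I_nQ, in_loc q x.

(* component model q has relative degree 1 at time k (SISO, C,D common):
   the input u_k does not affect y_k but affects y_{k+1} *)
Definition reldeg1 (q : 'I_nQ) (k : int) : Prop :=
  pD S k = 0 /\ sc (pC S (k + 1) *m pB S q k) != 0.

(* Inverse system coefficients, selectors evaluated at x = x_k *)
Definition iD (k : int) (x : 'cV[R]_nx) : R := (sc (pC S (k + 1) *m bB k x))^-1.
Definition iC (k : int) (x : 'cV[R]_nx) : 'rV[R]_nx :=
  - (iD k x *: (pC S (k + 1) *m bA k x)).
Definition iG (k : int) (x : 'cV[R]_nx) : R :=
  - (iD k x * (sc (pC S (k + 1) *m bF k x) + pG S (k + 1))).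
Definition iA (k : int) (x : 'cV[R]_nx) : 'M[R]_nx := bA k x + bB k x *m iC k x.
Definition iB (k : int) (x : 'cV[R]_nx) : 'cV[R]_nx := bB k x *m (iD k x)%:M.
Definition iF (k : int) (x : 'cV[R]_nx) : 'cV[R]_nx := bF k x + bB k x *m (iG k x)%:M.

Definition is_inv_traj (x : int -> 'cV[R]_nx) (u y : int -> R) : Prop :=
  forall k : int,
    x (k + 1) = iA k (x k) *m x k + iB k (x k) *m (y (k + 1))%:M + iF k (x k) /\
    u k = sc (iC k (x k) *m x k) + iD k (x k) * y (k + 1) + iG k (x k).

End PWADefs.

From mathcomp Require Import all_boot all_order all_algebra ring.
Set Implicit Arguments. Unset Strict Implicit. Unset Printing Implicit Defensive.
Import GRing.Theory Num.Theory.
Local Open Scope ring_scope.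

(** Since the switching only depends on [x_k] and the locations partition the
state space, at each time the system is the affine model of the location of
[x_k]; with relative degree one, [y_(k+1) = C_(k+1) (A_k x_k + B_k u_k + F_k)
+ G_(k+1)] with [C_(k+1) B_k] a nonzero scalar, so this output equation can be
solved for [u_k].  Substituting that [u_k] into the state equation gives the
inverse system, and conversely the inverse input equation at time [k - 1]
gives back the output equation at time [k]. *)

Lemma sc_scalar_mx {R : realFieldType} (a : R) : sc a%:M = a.
Proof. by rewrite /sc mxE. Qed.

Lemma scK {R : realFieldType} (m : 'M[R]_1) : (sc m)%:M = m.
Proof. by apply/matrixP => i j; rewrite !ord1 mxE. Qed.

Lemma scD {R : realFieldType} (m n : 'M[R]_1) : sc (m + n) = sc m + sc n.
Proof. by rewrite /sc mxE. Qed.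

Lemma scZ {R : realFieldType} (a : R) (m : 'M[R]_1) : sc (a *: m) = a * sc m.
Proof. by rewrite /sc mxE. Qed.

Lemma scN {R : realFieldType} (m : 'M[R]_1) : sc (- m) = - sc m.
Proof. by rewrite /sc mxE. Qed.

Section PWAInverse.
Variables (R : realFieldType) (nx nP nQ : nat) (S : pwa R nx nP nQ).
Hypothesis locsP : locations_partition S.

Definition next_state (k : int) (x : 'cV[R]_nx) (u : R) : 'cV[R]_nx :=
  bA S k x *m x + bB S k x *m u%:M + bF S k x.

Definition inv_input (k : int) (x : 'cV[R]_nx) (y' : R) : R :=
  sc (iC S k x *m x) + iD S k x * y' + iG S k x.

Lemma boldM_in_loc {a b} (M : 'I_nQ -> int -> 'M[R]_(a, b)) k {q x} :
  in_loc S q x -> boldM S M k x = M q k.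
Proof.
move=> xq; have [q0 [_ q0_uniq]] := locsP x.
rewrite /boldM (bigD1 q) //= big1 => [|q' neq_q'q].
  by rewrite /Ksel xq scale1r addr0.
rewrite /Ksel; case: ifP => [xq'|_]; last by rewrite scale0r.
by move: neq_q'q; rewrite -(q0_uniq q' xq') (q0_uniq q xq) eqxx.
Qed.

Lemma CB_neq0 (k : int) (x : 'cV[R]_nx) : (forall q, reldeg1 S q k) ->
  sc (pC S (k + 1) *m bB S k x) != 0.
Proof.
move=> reldeg; have [q [xq _]] := locsP x.
by rewrite /bB (boldM_in_loc _ _ xq); case: (reldeg q).
Qed.

Lemma inv_next_state (k : int) (x : 'cV[R]_nx) (y' : R) :
  iA S k x *m x + iB S k x *m y'%:M + iF S k x =
  next_state k x (inv_input k x y').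
Proof.
rewrite /iA /iB /iF /next_state /inv_input.
rewrite mulmxDl -!mulmxA -(scK (iC S k x *m x)).
rewrite -scalar_mxM !mul_mx_scalar !scalerDl sc_scalar_mx !addrA; exact: addrAC.
Qed.

Lemma inv_inputP (k : int) (x : 'cV[R]_nx) (u y' : R) :
  sc (pC S (k + 1) *m bB S k x) != 0 ->
  u = inv_input k x y' <->
  y' = sc (pC S (k + 1) *m next_state k x u) + pG S (k + 1).
Proof.
move=> CB0; rewrite /inv_input /next_state /iC /iG /iD.
rewrite mulNmx -scalemxAl scN scZ !mulmxDr !scD mul_mx_scalar -scalemxAr scZ mulmxA.
by split=> ->; field.
Qed.

End PWAInverse.

Theorem corollary1 (R : realFieldType) (nx nP nQ : nat) (S : pwa R nx nP nQ)
    (x : int -> 'cV[R]_nx) (u y : int -> R) :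
  locations_partition S ->
  (forall (q : 'I_nQ) (k : int), reldeg1 S q k) ->
  all_locs_reachable S (x 0) ->
  (is_traj S x u y <-> is_inv_traj S x u y).
Proof.
move=> locsP reldeg _.
have [q0 _] := locsP 0.
have D0 k : pD S k = 0 by case: (reldeg q0 k).
have CB0 k xk := CB_neq0 locsP xk (reldeg^~ k).
split=> traj k.
- have [xE _] := traj k; have [_ yE] := traj (k + 1).
  have uE : u k = inv_input S k (x k) (y (k + 1)).
    by apply/(inv_inputP _ _ (CB0 _ _)); rewrite yE D0 mul0r addr0 xE.
  by rewrite inv_next_state -uE.
- have xE (j : int) : x (j + 1) = next_state S j (x j) (u j).
    by have [xE uE] := traj j; rewrite xE inv_next_state uE.
  split; first exact: xE.
  have yE := (inv_inputP _ _ (CB0 _ _)).1 (traj (k - 1)).2.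
  by rewrite D0 mul0r addr0 -(subrK 1 k) yE -xE.
Qed.
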